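(* Let $n\ge0$. For every Motzkin path $\gamma$ of length $n$, in the poset $\mathcal{M}_n$ we have $|\Delta\gamma|=\omega_{HU}(\gamma)+\omega_{DH}(\gamma)+\omega_{DU}(\gamma)+\omega_{HH}(\gamma)$ and $|\nabla\gamma|=\omega_{UH}(\gamma)+\omega_{HD}(\gamma)+\omega_{UD}(\gamma)+\omega^*_{HH}(\gamma)$. For every Grand Motzkin path $\gamma$ of length $n$, in the poset $\mathcal{GM}_n$ we have $|\Delta\gamma|=\omega_{HU}(\gamma)+\omega_{DH}(\gamma)+\omega_{DU}(\gamma)+\omega_{HH}(\gamma)$ and $|\nabla\gamma|=\omega_{UH}(\gamma)+\omega_{HD}(\gamma)+\omega_{UD}(\gamma)+\omega_{HH}(\gamma)$.
   Context: Steps: $U=(1,1)$, $D=(1,-1)$, $H=(1,0)$. A Grand Motzkin path of length $n$ is a lattice path from $(0,0)$ to $(n,0)$ with steps $U,D,H$; a Motzkin path is a Grand Motzkin path never going below the $x$-axis. $\mathcal{M}_n$ (resp. $\mathcal{GM}_n$) is the set of Motzkin (resp. Grand Motzkin) paths of length $n$, partially ordered by $\gamma_1\le\gamma_2$ iff $\gamma_1$ lies weakly below $\gamma_2$. $\Delta x$ is the set of elements covering $x$, $\nabla x$ the set of elements covered by $x$. Paths are identified with words of steps; $\omega_\alpha(\gamma)$ is the number of occurrences of the word $\alpha$ as a factor (contiguous subword, overlapping occurrences counted separately) of $\gamma$; $\omega^*_{HH}(\gamma)$ is the number of occurrences of the factor $HH$ not lying on the $x$-axis. *)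

From HB Require Import structures.
From mathcomp Require Import all_boot all_order all_algebra.
Set Implicit Arguments. Unset Strict Implicit. Unset Printing Implicit Defensive.
Import GRing.Theory Num.Theory.

(* Steps U=(1,1), D=(1,-1), H=(1,0). *)
Inductive step := U | D | H.

Definition step_code (s : step) : 'I_3 :=
  match s with U => @Ordinal 3 0 isT | D => @Ordinal 3 1 isT | H => @Ordinal 3 2 isT end.
Definition step_decode (i : 'I_3) : step :=
  match val i with 0 => U | 1 => D | _ => H end.
Lemma step_codeK : cancel step_code step_decode. Proof. by case. Qed.
HB.instance Definition _ := Finite.copy step (can_type step_codeK).

Definition stepv (s : step) : int :=
  match s with U => 1%R | D => (-1)%R | H => 0%R end.

Definition height (s : seq step) (k : nat) : int :=
  (\sum_(x <- take k s) stepv x)%R.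

Definition grand_motzkin (s : seq step) : bool := height s (size s) == 0%R.
Definition motzkin (s : seq step) : bool :=
  grand_motzkin s && all (fun k => (0 <= height s k)%R) (iota 0 (size s).+1).

Definition path_le n (g1 g2 : n.-tuple step) : bool :=
  [forall k : 'I_n.+1, (height g1 k <= height g2 k)%R].
Definition path_lt n (g1 g2 : n.-tuple step) : bool :=
  (g1 != g2) && path_le g1 g2.

Definition covers n (P : pred (n.-tuple step)) (x y : n.-tuple step) : bool :=
  [&& P x, P y, path_lt x y &
      ~~ [exists z : n.-tuple step, [&& P z, path_lt x z & path_lt z y]]].

(* Delta x : elements covering x ; Nabla x : elements covered by x *)
Definition upper_covers n (P : pred (n.-tuple step)) (x : n.-tuple step) :=
  [set y : n.-tuple step | covers P x y].
Definition lower_covers n (P : pred (n.-tuple step)) (x : n.-tuple step) :=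
  [set y : n.-tuple step | covers P y x].

(* number of occurrences of the word a as a factor of s (overlaps counted) *)
Definition occ (a s : seq step) : nat :=
  count (fun i => take (size a) (drop i s) == a) (iota 0 (size s)).

Definition occ_HH_star (s : seq step) : nat :=
  count (fun i => (take 2 (drop i s) == [:: H; H]) && (height s i != 0%R))
        (iota 0 (size s)).

From Pilot Require Import Defs.
From mathcomp Require Import all_boot all_order all_algebra.
From mathcomp Require Import zify.
Set Implicit Arguments. Unset Strict Implicit. Unset Printing Implicit Defensive.
Import Order.TTheory GRing.Theory Num.Theory.

(* A path is determined by its height profile, and the order compares
   profiles pointwise.  The elementary upward move at position i replaces a
   factor ab with a <> U and b <> D by (a+1)(b-1) (H+1 = U, D+1 = H, and
   dually for -1): this raises the height after i+1 steps by one and changes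
   nothing else.  We treat both posets at once as posets of paths confined to
   a band of heights given by a convex predicate c (c = predT for Grand
   Motzkin paths, c = (0 <=) for Motzkin paths) and show that the paths
   covering x are exactly the results of the upward moves at the positions i
   that stay in the band.  Reflecting paths in the x-axis (swapping U and D)
   reverses the order, so lower covers are upper covers of the reflected path
   in the reflected band.  The theorem then reduces to identifying, position
   by position, the admissible moves with occurrences of the listed factors. *)

Definition sumv (s : seq step) : int := (\sum_(x <- s) stepv x)%R.

Lemma sumv_cons a s : sumv (a :: s) = (stepv a + sumv s)%R.
Proof. by rewrite /sumv big_cons. Qed.

Lemma height0 s : height s 0 = 0%R.
Proof. by rewrite /height take0 big_nil. Qed.

Lemma heightS s j : j < size s ->
  height s j.+1 = (height s j + stepv (nth H s j))%R.
Proof. by move=> hj; rewrite /height (take_nth H hj) -cats1 big_cat big_seq1. Qed.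

Lemma height_step s j :
  (height s j.+1 <= height s j + 1)%R /\ (height s j <= height s j.+1 + 1)%R.
Proof.
case: (ltnP j (size s)) => hj.
  by rewrite heightS //; case: (nth H s j) => /=; split; lia.
by rewrite /height !take_oversize ?(leq_trans hj) //; lia.
Qed.

Lemma stepv_inj : injective stepv. Proof. by case; case. Qed.

Lemma eq_from_heights s t : size s = size t ->
  (forall k, k <= size s -> height s k = height t k) -> s = t.
Proof.
move=> hst hk; apply: (eq_from_nth (x0 := H) hst) => i hi.
have hit : i < size t by rewrite -hst.
apply: stepv_inj; apply: (addrI (height s i)).
by rewrite -heightS // hk // heightS // hk // ltnW.
Qed.

Lemma drop_pair s i : i.+1 < size s ->
  drop i s = nth H s i :: nth H s i.+1 :: drop i.+2 s.
Proof. by move=> hi; rewrite (drop_nth H (ltnW hi)) (drop_nth H hi). Qed.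

Definition inc a := match a with D => H | _ => U end.
Definition dec a := match a with U => H | _ => D end.

Definition raisable (s : seq step) i :=
  if drop i s is a :: b :: _ then (a != U) && (b != D) else false.
Definition raise (s : seq step) i :=
  if drop i s is a :: b :: t then take i s ++ inc a :: dec b :: t else s.

Lemma raisable_size s i : raisable s i -> i.+1 < size s.
Proof.
rewrite /raisable; case e: (drop i s) => [|a [|b t]] // _.
by have := size_drop i s; rewrite e /=; lia.
Qed.

Lemma raisableE s i : i.+1 < size s ->
  raisable s i = (nth H s i != U) && (nth H s i.+1 != D).
Proof. by move=> hi; rewrite /raisable drop_pair. Qed.

Lemma size_raise s i : size (raise s i) = size s.
Proof.
rewrite /raise; case e: (drop i s) => [|a [|b t]] //.
have := size_drop i s; rewrite e /= => hs.
by rewrite size_cat size_take /=; case: ifP; lia.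
Qed.

Lemma height_raise s i : raisable s i -> forall k,
  height (raise s i) k = (height s k + (k == i.+1)%:Z)%R.
Proof.
move=> hr k; have hi := raisable_size hr.
have [p [a [b [t [es hp]]]]] : exists p a b t, s = p ++ [:: a, b & t] /\ size p = i.
  exists (take i s), (nth H s i), (nth H s i.+1), (drop i.+2 s).
  by rewrite -drop_pair // cat_take_drop size_takel // ltnW // ltnW.
subst s i; clear hi; move: hr.
rewrite /raisable /raise drop_size_cat // take_size_cat // => /andP[ha hb].
rewrite /height !take_cat; case: ltnP => hk.
  by rewrite (_ : (k == _) = false) ?addr0 //; lia.
rewrite !big_cat /= -!/(sumv _) -addrA; congr (_ + _)%R; rewrite -(subnKC hk) addKn.
case: (k - size p) => [|[|m]] /=.
- by rewrite (_ : (_ + 0 == _) = false) ?addr0 //; lia.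
- rewrite addn1 eqxx /take !sumv_cons /sumv !big_nil !addr0.
  by case: a ha.
- rewrite (_ : (_ + m.+2 == _) = false) ?addr0; last by lia.
  rewrite !sumv_cons !addrA; congr (_ + _)%R.
  by case: a ha; case: b hb.
Qed.

Definition swap a := match a with U => D | D => U | H => H end.
Lemma swapK : involutive swap. Proof. by case. Qed.

Lemma height_swap s k : height (map swap s) k = (- height s k)%R.
Proof. by rewrite /height -map_take big_map -sumrN; apply: eq_bigr => -[]. Qed.

Section FixedLength.
Variable n : nat.
Implicit Types x y z : n.-tuple step.

Definition raiseT x i : n.-tuple step :=
  @Tuple n step (raise x i) (introT eqP (etrans (size_raise x i) (size_tuple x))).

Lemma path_leP x y :
  reflect (forall k, k <= n -> (height x k <= height y k)%R) (Defs.path_le x y).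
Proof.
apply: (iffP forallP) => h k.
  by move=> hk; exact: (h (Ordinal (hk : k < n.+1))).
exact: h k (ltn_ord k).
Qed.

Lemma eq_tuple_heights x y :
  (forall k, k <= n -> height x k = height y k) -> x = y.
Proof.
move=> h; apply: val_inj; apply: eq_from_heights; first by rewrite !size_tuple.
by rewrite size_tuple.
Qed.

Lemma lt_raise x i : raisable x i -> path_lt x (raiseT x i).
Proof.
move=> hr; apply/andP; split.
  apply/eqP => /(congr1 (fun z : n.-tuple step => height z i.+1)).
  by rewrite /= height_raise // eqxx => /eqP; rewrite -subr_eq0 opprD addrA subrr.
by apply/path_leP => k _; rewrite /= height_raise // lerDl.
Qed.

Lemma raise_le x y i : raisable x i -> Defs.path_le x y ->
  (height x i.+1 < height y i.+1)%R -> Defs.path_le (raiseT x i) y.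
Proof.
move=> hr /path_leP lxy hlt; apply/path_leP => k hk; rewrite /= height_raise //.
case: eqP => [->|_]; last by rewrite addr0 lxy.
by rewrite lezD1.
Qed.

Lemma raise_cover x z i : raisable x i ->
  Defs.path_le x z -> Defs.path_le z (raiseT x i) -> z = x \/ z = raiseT x i.
Proof.
move=> hr /path_leP lxz /path_leP lzy.
have hi : i.+1 <= n by have := raisable_size hr; rewrite size_tuple => /ltnW.
have same k : k <= n -> k != i.+1 -> height z k = height x k.
  move=> hk ne; apply/eqP; rewrite eq_le lxz // andbT.
  by have := lzy k hk; rewrite /= height_raise // (negbTE ne) addr0.
have := lzy _ hi; have := lxz _ hi; rewrite /= height_raise // eqxx => h1 h2.
case: (eqVneq (height z i.+1) (height x i.+1)) => e; [left | right].
  by apply: eq_tuple_heights => k hk; case: (eqVneq k i.+1) => [->|]; auto.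
apply: eq_tuple_heights => k hk; rewrite /= height_raise //.
case: (eqVneq k i.+1) => [->|ne]; last by rewrite addr0 same.
by apply/eqP; rewrite eq_le h2 lezD1 lt_neqAle eq_sym e h1.
Qed.

(* if x < y share their endpoint, some move at a position where x lies
   strictly below y is possible: take such a position where x is lowest *)
Lemma exists_raisable x y : path_lt x y -> height x n = height y n ->
  exists2 i, raisable x i & (height x i.+1 < height y i.+1)%R.
Proof.
case/andP=> nxy /path_leP lxy hn.
have [k0 hk0] : exists k0 : 'I_n.+1, (height x k0 < height y k0)%R.
  case: (pickP [pred k : 'I_n.+1 | height x k < height y k]%R) => [k0|none].
    by exists k0.
  case/eqP: nxy; apply: eq_tuple_heights => k hk; apply/eqP.
  by rewrite eq_le lxy //= leNgt; apply/negbT/(none (Ordinal (hk : k < n.+1))).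
case: (@arg_minP _ _ 'I_n.+1 k0 (fun k : 'I_n.+1 => height x k < height y k)%R
  (fun k => height x k) hk0) => k hk hmin.
have lowest j : j <= n -> (height y k <= height y j + 1)%R ->
    (height x k <= height x j)%R.
  move=> hj hyj; case hxy: (height x j < height y j)%R.
    exact: (hmin (Ordinal (hj : j < n.+1)) hxy).
  by move/negbT: hxy; rewrite -leNgt; lia.
have [i ki] : exists i, nat_of_ord k = i.+1.
  by case: (nat_of_ord k) hk => [|i]; [rewrite !height0 ltxx | exists i].
have hkn : i.+1 < n.
  rewrite -ki ltn_neqAle -ltnS ltn_ord andbT.
  by apply: contraTneq hk => ->; rewrite hn ltxx.
have hs : i.+1 < size x by rewrite size_tuple.
exists i; last by rewrite -ki.
rewrite raisableE //; apply/andP; split; apply/eqP => ea.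
  have := lowest i (ltnW (ltnW hkn)); rewrite ki (heightS (ltnW hs)) ea /=.
  by case: (height_step y i); lia.
have := lowest i.+2 hkn; rewrite ki (heightS hs) ea /=.
by case: (height_step y i.+1); lia.
Qed.

Definition negT x : n.-tuple step := map_tuple swap x.
Lemma negTK : involutive negT.
Proof. by move=> x; apply: val_inj; rewrite /= -map_comp (eq_map swapK) map_id. Qed.

Lemma path_lt_neg x y : path_lt (negT x) (negT y) = path_lt y x.
Proof.
congr (_ && _); first by rewrite (inj_eq (can_inj negTK)) eq_sym.
by apply/path_leP/path_leP => h k hk; have := h k hk; rewrite /= !height_swap lerN2.
Qed.

Lemma covers_neg (P : pred (n.-tuple step)) x y :
  covers P y x = covers (fun z => P (negT z)) (negT x) (negT y).
Proof.
rewrite /covers !negTK !path_lt_neg andbCA; congr [&& _, _, _ & ~~ _].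
apply/existsP/existsP => -[z /and3P[hz hxz hzy]]; exists (negT z).
  by rewrite negTK !path_lt_neg hz hxz hzy.
by rewrite -[path_lt y _]path_lt_neg -[path_lt _ x]path_lt_neg !negTK hz hxz hzy.
Qed.

Lemma card_lower (P : pred (n.-tuple step)) x :
  #|lower_covers P x| = #|upper_covers (fun z => P (negT z)) (negT x)|.
Proof.
rewrite -(card_preimset _ (can_inj negTK)).
by apply: eq_card => y; rewrite !inE covers_neg negTK.
Qed.

Lemma upper_covers_ext (P Q : pred (n.-tuple step)) x : P =1 Q ->
  upper_covers P x = upper_covers Q x.
Proof.
move=> hPQ; apply/setP => y; rewrite !inE /covers !hPQ.
by congr [&& _, _, _ & ~~ _]; apply: eq_existsb => z; rewrite hPQ.
Qed.

End FixedLength.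

Definition banded (c : pred int) (s : seq step) :=
  grand_motzkin s && all (fun k => c (height s k)) (iota 0 (size s).+1).

Definition convex (c : pred int) :=
  forall a b m, c a -> c b -> (a <= m)%R -> (m <= b)%R -> c m.

Definition admissible (c : pred int) (s : seq step) i :=
  raisable s i && c (height s i.+1 + 1)%R.

Lemma convex_ge0 : convex (fun h : int => 0 <= h)%R.
Proof. by move=> a b m /=; lia. Qed.

Lemma convex_le0 : convex (fun h : int => 0 <= - h)%R.
Proof. by move=> a b m /=; lia. Qed.

Lemma banded_height c s k : banded c s -> k <= size s -> c (height s k).
Proof. by case/andP=> _ /allP h hk; apply: h; rewrite mem_iota. Qed.

Lemma banded_raise c s i : banded c s -> admissible c s i -> banded c (raise s i).
Proof.
move=> hs /andP[hr hc]; have hi := raisable_size hr.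
apply/andP; split.
  rewrite /grand_motzkin size_raise height_raise // (_ : size s == i.+1 = false).
    by rewrite addr0; case/andP: hs.
  by apply/negbTE; rewrite neq_ltn hi orbT.
apply/allP => k; rewrite mem_iota size_raise height_raise // => hk.
by case: eqP => [->|_] //; rewrite addr0 banded_height //; lia.
Qed.

Lemma eq_banded c c' s : c =1 c' -> banded c s = banded c' s.
Proof. by move=> e; congr (_ && _); apply: eq_all => k; rewrite /= e. Qed.

Lemma banded_swap c s : banded c (map swap s) = banded (fun h => c (- h)%R) s.
Proof.
rewrite /banded /grand_motzkin size_map !height_swap oppr_eq0.
by congr (_ && _); apply: eq_all => k; rewrite height_swap.
Qed.

Lemma grand_motzkin_banded s : grand_motzkin s = banded predT s.
Proof. by rewrite /banded all_predT andbT. Qed.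

Lemma motzkin_banded s : motzkin s = banded (fun h => 0 <= h)%R s.
Proof. by []. Qed.

Section Band.
Variables (n : nat) (c : pred int).
Hypothesis c_convex : convex c.
Local Notation P := (fun z : n.-tuple step => banded c z).

Lemma covers_raise x i : P x -> admissible c x i -> covers P x (raiseT x i).
Proof.
move=> hx ha; have hr : raisable x i by case/andP: ha.
rewrite /covers hx banded_raise // lt_raise //=; apply/existsP => -[z].
case/and3P=> _ /andP[nxz lxz] /andP[nzy lzy].
by case: (raise_cover hr lxz lzy) => ez; [rewrite ez eqxx in nxz | rewrite ez eqxx in nzy].
Qed.

Lemma covers_admissible x y : P x -> covers P x y ->
  exists2 i, admissible c x i & y = raiseT x i.
Proof.
move=> hx /and4P[_ hy hxy hno].
have ends (z : n.-tuple step) : banded c z -> height z n = 0%R.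
  by case/andP=> /eqP; rewrite size_tuple.
have hn : height x n = height y n by rewrite ends // ends.
have [i hr hlt] := exists_raisable hxy hn.
have hi : i.+1 <= n by have := raisable_size hr; rewrite size_tuple => /ltnW.
have ha : admissible c x i.
  rewrite /admissible hr.
  apply: (c_convex (@banded_height c x i.+1 hx _) (@banded_height c y i.+1 hy _));
  by rewrite ?size_tuple ?lerDl ?lezD1.
exists i => //; apply/eqP; apply: contraNT hno => ne; apply/existsP.
exists (raiseT x i); rewrite banded_raise // lt_raise //= /path_lt eq_sym ne.
by rewrite raise_le //; case/andP: hxy.
Qed.

Lemma card_upper_banded x : P x ->
  #|upper_covers P x| = count (admissible c x) (iota 0 n).
Proof.
move=> hx.
have -> : upper_covers P x = [set raiseT x i | i : 'I_n in [pred i : 'I_n | admissible c x i]].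
  apply/setP => y; rewrite inE; apply/idP/imsetP => [/(covers_admissible hx)|].
    case=> i ha ->; have := raisable_size (proj1 (andP ha)); rewrite size_tuple => hi.
    by exists (Ordinal (ltnW hi)).
  by case=> i ha ->; apply: covers_raise.
rewrite card_in_imset.
  by rewrite cardE /enum_mem size_filter -enumT -val_enum_ord count_map.
move=> i j /andP[hi _] /andP[hj _] /(congr1 (fun z : n.-tuple step => height z i.+1)).
rewrite /= !height_raise // eqxx => /addrI.
by case: (eqVneq i.+1 j.+1) => [[/val_inj]|].
Qed.

End Band.

Definition at_factor (a s : seq step) i := take (size a) (drop i s) == a.

Lemma count_sum4 (T : eqType) (p q1 q2 q3 q4 : pred T) (s : seq T) :
  {in s, forall i, (p i : nat) = q1 i + q2 i + q3 i + q4 i} ->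
  count p s = count q1 s + count q2 s + count q3 s + count q4 s.
Proof.
elim: s => //= a s IH h.
by rewrite h ?mem_head // IH => [|i hi]; [lia | apply: h; rewrite in_cons hi orbT].
Qed.

Lemma raisable_factors s i : (raisable s i : nat) =
  at_factor [:: H; U] s i + at_factor [:: D; H] s i +
  at_factor [:: D; U] s i + at_factor [:: H; H] s i.
Proof.
by rewrite /raisable /at_factor; case: (drop i s) => [|a [|b t]] //;
  case: a => /=; rewrite ?take0 //; case: b.
Qed.

Lemma lowerable_factors s i : (raisable (map swap s) i : nat) =
  at_factor [:: U; H] s i + at_factor [:: H; D] s i +
  at_factor [:: U; D] s i + at_factor [:: H; H] s i.
Proof.
by rewrite /raisable /at_factor -map_drop; case: (drop i s) => [|a [|b t]] //;
  case: a => /=; rewrite ?take0 //; case: b.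
Qed.

(* For a Motzkin path, a downward move at i leaves the height after i+1
   steps nonnegative except at a factor HH lying on the x-axis. *)
Lemma motzkin_lowerable s i : motzkin s -> i < size s ->
  (raisable (map swap s) i && (height s i.+1 != 0%R) : nat) =
  at_factor [:: U; H] s i + at_factor [:: H; D] s i +
  at_factor [:: U; D] s i + (at_factor [:: H; H] s i && (height s i != 0%R)).
Proof.
move=> hs hi; have hp k : k <= size s -> (0 <= height s k)%R.
  by move=> hk; apply: (banded_height hs hk).
case: (ltnP i.+1 (size s)) => hi2; last first.
  by rewrite /raisable /at_factor -map_drop (drop_nth H hi) drop_oversize //=;
    case: (nth H s i).
have h0 := hp i (ltnW hi); have h2 := hp i.+2 hi2.
move: h2; rewrite /raisable /at_factor -map_drop drop_pair //= take0.
by rewrite (heightS hi2) (heightS hi); case: (nth H s i); case: (nth H s i.+1) => /=; lia.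
Qed.

Section Corollaries.
Variables (n : nat) (g : n.-tuple step).

Lemma motzkin_upper : motzkin g ->
  #|upper_covers (fun x : n.-tuple step => motzkin x) g|
    = occ [:: H; U] g + occ [:: D; H] g + occ [:: D; U] g + occ [:: H; H] g.
Proof.
move=> hg; rewrite (card_upper_banded convex_ge0) //.
rewrite /occ size_tuple; apply: count_sum4 => i; rewrite mem_iota => /= hi.
have h1 : (0 <= height g i.+1)%R by apply: banded_height hg _; rewrite size_tuple.
by rewrite /admissible (_ : (0 <= _ + 1)%R) ?andbT ?raisable_factors //; lia.
Qed.

Lemma grand_motzkin_upper : grand_motzkin g ->
  #|upper_covers (fun x : n.-tuple step => grand_motzkin x) g|
    = occ [:: H; U] g + occ [:: D; H] g + occ [:: D; U] g + occ [:: H; H] g.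
Proof.
rewrite grand_motzkin_banded => hg.
rewrite (upper_covers_ext _ grand_motzkin_banded) card_upper_banded //.
rewrite /occ size_tuple; apply: count_sum4 => i _.
by rewrite /admissible andbT raisable_factors.
Qed.

Lemma grand_motzkin_lower : grand_motzkin g ->
  #|lower_covers (fun x : n.-tuple step => grand_motzkin x) g|
    = occ [:: U; H] g + occ [:: H; D] g + occ [:: U; D] g + occ [:: H; H] g.
Proof.
move=> hg; rewrite card_lower (@upper_covers_ext _ _ (fun z => banded predT z)).
  rewrite card_upper_banded //; last by rewrite banded_swap -grand_motzkin_banded.
  rewrite /occ size_tuple; apply: count_sum4 => i _.
  by rewrite /admissible andbT lowerable_factors.
by move=> z; rewrite grand_motzkin_banded banded_swap.
Qed.

Lemma motzkin_lower : motzkin g ->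
  #|lower_covers (fun x : n.-tuple step => motzkin x) g|
    = occ [:: U; H] g + occ [:: H; D] g + occ [:: U; D] g + occ_HH_star g.
Proof.
move=> hg; rewrite card_lower.
rewrite (@upper_covers_ext _ _ (fun z => banded (fun h => 0 <= - h)%R z)); last first.
  by move=> z; rewrite motzkin_banded banded_swap.
rewrite (card_upper_banded convex_le0); last first.
  by rewrite banded_swap (eq_banded _ (c' := fun h => 0 <= h)%R) // => h /=; rewrite opprK.
rewrite /occ /occ_HH_star size_tuple; apply: count_sum4 => i.
rewrite mem_iota => /= hi; rewrite -motzkin_lowerable ?size_tuple //.
rewrite /admissible /= height_swap; congr (nat_of_bool (_ && _)).
have h1 : (0 <= height g i.+1)%R by apply: banded_height hg _; rewrite size_tuple.
by apply/idP/idP; lia.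
Qed.

End Corollaries.

Theorem mainTheorem6 (n : nat) :
  (forall g : n.-tuple step, motzkin g ->
     #|upper_covers (fun x : n.-tuple step => motzkin x) g|
       = occ [:: H; U] g + occ [:: D; H] g + occ [:: D; U] g + occ [:: H; H] g
   /\ #|lower_covers (fun x : n.-tuple step => motzkin x) g|
       = occ [:: U; H] g + occ [:: H; D] g + occ [:: U; D] g + occ_HH_star g)
  /\
  (forall g : n.-tuple step, grand_motzkin g ->
     #|upper_covers (fun x : n.-tuple step => grand_motzkin x) g|
       = occ [:: H; U] g + occ [:: D; H] g + occ [:: D; U] g + occ [:: H; H] g
   /\ #|lower_covers (fun x : n.-tuple step => grand_motzkin x) g|
       = occ [:: U; H] g + occ [:: H; D] g + occ [:: U; D] g + occ [:: H; H] g).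
Proof.
split=> g hg; split.
- exact: motzkin_upper.
- exact: motzkin_lower.
- exact: grand_motzkin_upper.
- exact: grand_motzkin_lower.
Qed.
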